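(* Let $n\in\mathbb{N}$ and $p^*\in[1,\infty]$. If $\mathcal{P}=\{x_1,\dots,x_n\}$ is a collection of $n$ points in $[0,1]$ (repetitions allowed) whose $L_{p^*}$-discrepancy is minimal among all collections of $n$ points in $[0,1]$, then for each $j=1,\dots,n$ the interval $[\frac{j-1}{n},\frac jn)$ contains exactly one point of $\mathcal{P}$.
   Context: For $\mathcal{P}=\{x_1,\dots,x_n\}\subseteq[0,1]$, the local discrepancy is $\Delta_{\mathcal{P}}(t)=\frac1n\#\{j:x_j\in[0,t)\}-t$ for $t\in[0,1]$, and $L_{p^*}(\mathcal{P})=\|\Delta_{\mathcal{P}}\|_{L_{p^*}([0,1])}$. *)

From Stdlib Require Import Reals Lra List Classical ClassicalEpsilon.
Open Scope R_scope.

Definition count_in (a b : R) (P : list R) : nat :=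
  length (filter (fun x => if Rle_dec a x then
                             (if Rlt_dec x b then true else false)
                           else false) P).

Definition local_disc (P : list R) (t : R) : R :=
  INR (count_in 0 t P) / INR (length P) - t.

(* Riemann integral on [a,b], defined (classically) as RiemannInt whenever
   f is Riemann integrable, 0 otherwise (never happens for the integrands used). *)
Definition RInt (f : R -> R) (a b : R) : R :=
  match excluded_middle_informative (exists _ : Riemann_integrable f a b, True) with
  | left H => RiemannInt (proj1_sig (constructive_indefinite_description _ H))
  | right _ => 0
  end.

Definition rpow (x p : R) : R := if Req_EM_T x 0 then 0 else Rpower x p.

(* Supremum of a set of reals (chosen least upper bound; 0 if none exists). *)
Definition Rsup (E : R -> Prop) : R :=
  epsilon (inhabits 0) (fun s => is_lub E s).

(* Exponent p* in [1, infinity]: Some p = finite p, None = infinity. *)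
Definition valid_exp (p : option R) : Prop :=
  match p with Some q => 1 <= q | None => True end.

(* L_{p*} norm on [0,1]. For p* = infinity we use the sup of |f| on [0,1];
   for the left-continuous local discrepancy this coincides with the
   essential supremum. *)
Definition Lp_norm01 (p : option R) (f : R -> R) : R :=
  match p with
  | Some q => rpow (RInt (fun t => rpow (Rabs (f t)) q) 0 1) (/ q)
  | None => Rsup (fun y => exists t, 0 <= t <= 1 /\ y = Rabs (f t))
  end.

Definition Lp_disc (p : option R) (P : list R) : R :=
  Lp_norm01 p (local_disc P).

Definition in_unit (P : list R) : Prop := forall x, In x P -> 0 <= x <= 1.

(* The midpoint set M = {(2i+1)/(2n) : i < n} is pointwise optimal: at every t its
   count m(t) = #(M ∩ [0,t)) is an integer nearest to nt, so |Δ_M(t)| <= 1/(2n), and any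
   other count c differs from m(t) by at least 1, whence |Δ_M(t)| <= |Δ_P(t)| for every
   n-point set P.  If #(P ∩ [0,k/n)) <> k for some k, then by monotonicity of the count
   |Δ_P| >= 3/(4n) on an interval of length 1/(4n) next to k/n, where |Δ_M| <= 1/(2n);
   so every L_p norm of Δ_M, including the sup norm, is strictly smaller than that of Δ_P.
   Hence an optimal P has exactly k points in [0,k/n) for each k <= n. *)

From Pilot Require Import Defs.
From Stdlib Require Import Reals Lra Lia List Classical ClassicalEpsilon.
From Coquelicot Require Import Coquelicot.
Open Scope R_scope.

Lemma rpow_nonneg x q : 0 <= rpow x q.
Proof.
  unfold rpow; destruct Req_EM_T; [lra|].
  left; apply exp_pos.
Qed.

Lemma rpow_lt x y q : 0 < q -> 0 <= x < y -> rpow x q < rpow y q.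
Proof.
  intros Hq Hxy; unfold rpow.
  destruct (Req_EM_T y 0); [lra|].
  destruct (Req_EM_T x 0); [apply exp_pos|].
  apply Rlt_Rpower_l; lra.
Qed.

Lemma rpow_le x y q : 0 < q -> 0 <= x <= y -> rpow x q <= rpow y q.
Proof.
  intros Hq Hxy; destruct (Req_dec x y) as [->|]; [lra|].
  left; apply rpow_lt; lra.
Qed.

Lemma continuous_rpow_Rabs q y0 : 0 < q -> continuous (fun y => rpow (Rabs y) q) y0.
Proof.
  intros Hq; destruct (Req_dec y0 0) as [->|Hy0].
  - apply continuity_pt_filterlim, continuity_pt_locally; intros eps.
    set (d := Rpower eps (/ q)).
    assert (Hd : 0 < d) by apply exp_pos.
    exists (mkposreal d Hd); intros y Hy.
    change (Rabs (y - 0) < d) in Hy; rewrite Rminus_0_r in Hy.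
    rewrite Rabs_R0; unfold rpow at 2; destruct Req_EM_T as [_|]; [|lra].
    rewrite Rminus_0_r, Rabs_right by (apply Rle_ge, rpow_nonneg).
    replace (pos eps) with (rpow d q).
    + apply rpow_lt; [lra|split; [apply Rabs_pos|exact Hy]].
    + unfold rpow; destruct Req_EM_T; [lra|].
      unfold d; rewrite Rpower_mult, Rinv_l, Rpower_1; [reflexivity|apply cond_pos|lra].
  - apply continuous_ext_loc with (fun y => exp (q * ln (Rabs y))).
    + exists (mkposreal _ (Rabs_pos_lt _ Hy0)); intros y Hy.
      change (Rabs (y - y0) < Rabs y0) in Hy.
      unfold rpow; destruct Req_EM_T; [|reflexivity].
      pose proof (Rabs_triang_inv y0 y); rewrite <- Rabs_Ropp, Ropp_minus_distr in Hy; lra.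
    + apply continuous_exp_comp, (continuous_scal_r q (fun y => ln (Rabs y))).
      apply continuous_comp; [apply continuous_Rabs|apply continuous_ln, Rabs_pos_lt, Hy0].
Qed.

Lemma count_in_cons a b x P : count_in a b (x :: P) =
  ((if Rle_dec a x then if Rlt_dec x b then 1 else 0 else 0) + count_in a b P)%nat.
Proof. unfold count_in; simpl; destruct Rle_dec; [destruct Rlt_dec|]; reflexivity. Qed.

Lemma count_in_app a b P Q : count_in a b (P ++ Q) = (count_in a b P + count_in a b Q)%nat.
Proof. unfold count_in; rewrite filter_app, length_app; reflexivity. Qed.

Lemma count_in_le_length a b P : (count_in a b P <= length P)%nat.
Proof. apply filter_length_le. Qed.

Lemma count_in_le a t t' P : t <= t' -> (count_in a t P <= count_in a t' P)%nat.
Proof.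
  intros H; induction P as [|x P IH]; [apply le_n|]; rewrite !count_in_cons.
  destruct Rle_dec; [|lia].
  destruct (Rlt_dec x t), (Rlt_dec x t'); lia || lra.
Qed.

Lemma count_in_split a b c P : a <= b <= c ->
  count_in a c P = (count_in a b P + count_in b c P)%nat.
Proof.
  intros H; induction P as [|x P IH]; [reflexivity|]; rewrite !count_in_cons.
  destruct (Rle_dec a x), (Rlt_dec x c), (Rlt_dec x b), (Rle_dec b x); lia || lra.
Qed.

Lemma count_in_map_seq_monotone (f : nat -> R) t k :
  (forall i j, (i <= j)%nat -> f i <= f j) -> 0 <= f 0%nat ->
  let m := count_in 0 t (map f (seq 0 k)) in
  (m <= k)%nat /\ (m = 0%nat \/ f (m - 1)%nat < t) /\ (m = k \/ t <= f m).
Proof.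
  intros Hmono Hf0; induction k as [|k IH]; cbv zeta in *; [cbn; lia|].
  rewrite seq_S, Nat.add_0_l, map_app, count_in_app; cbn [map].
  rewrite count_in_cons, Nat.add_0_r.
  destruct IH as [Hle [Hbelow Habove]].
  set (m := count_in 0 t (map f (seq 0 k))) in *.
  destruct (Rle_dec 0 (f k)) as [_|Hneg];
    [|exfalso; apply Hneg, (Rle_trans _ _ _ Hf0), Hmono; lia].
  destruct (Rlt_dec (f k) t) as [Hlt|Hge].
  - destruct Habove as [Hm|Hm].
    + rewrite Hm; split; [lia|split; [right|left; lia]].
      replace (k + 1 - 1)%nat with k by lia; exact Hlt.
    + exfalso; pose proof (Hmono m k Hle); lra.
  - rewrite Nat.add_0_r; split; [lia|split; [exact Hbelow|right]].
    destruct Habove as [->|Hm]; lra.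
Qed.

Lemma ex_RInt_count_in_step (P : list R) (F : nat -> R -> R) a b :
  (forall k t, continuous (F k) t) -> a <= b ->
  ex_RInt (fun t => F (count_in 0 t P) t) a b.
Proof.
  revert F a b; induction P as [|x P IH]; intros F a b HF Hab.
  - apply (@ex_RInt_continuous R_CompleteNormedModule); intros; apply HF.
  - set (s := if Rle_dec 0 x then 1%nat else 0%nat).
    assert (Hbelow : forall c d, c <= d <= x ->
              ex_RInt (fun t => F (count_in 0 t (x :: P)) t) c d).
    { intros c d Hcd; apply (ex_RInt_ext (fun t => F (count_in 0 t P) t));
        [|apply IH; auto; lra].
      intros t Ht; rewrite Rmin_left, Rmax_right in Ht by lra; rewrite count_in_cons.
      destruct Rle_dec; [destruct Rlt_dec|]; reflexivity || lra. }
    assert (Habove : forall c d, x <= c <= d ->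
              ex_RInt (fun t => F (count_in 0 t (x :: P)) t) c d).
    { intros c d Hcd; apply (ex_RInt_ext (fun t => F (s + count_in 0 t P)%nat t));
        [|apply (IH (fun k => F (s + k)%nat)); auto; lra].
      intros t Ht; rewrite Rmin_left, Rmax_right in Ht by lra; rewrite count_in_cons.
      unfold s; destruct Rle_dec; [destruct Rlt_dec|]; reflexivity || lra. }
    destruct (Rle_dec b x); [apply Hbelow; lra|].
    destruct (Rle_dec x a); [apply Habove; lra|].
    apply (ex_RInt_Chasles _ a x b); [apply Hbelow|apply Habove]; lra.
Qed.

Lemma ex_RInt_rpow_local_disc q P a b : 0 < q -> a <= b ->
  ex_RInt (fun t => rpow (Rabs (local_disc P t)) q) a b.
Proof.
  intros Hq Hab.
  apply (ex_RInt_count_in_step P (fun k t => rpow (Rabs (INR k / INR (length P) - t)) q));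
    [|exact Hab].
  intros k t.
  apply (continuous_comp (fun t => INR k / INR (length P) - t) (fun y => rpow (Rabs y) q)).
  - apply (continuous_minus (fun _ => INR k / INR (length P)));
      [apply continuous_const|apply continuous_id].
  - apply continuous_rpow_Rabs, Hq.
Qed.

Lemma Rabs_local_disc_le_1 P t : 0 <= t <= 1 -> Rabs (local_disc P t) <= 1.
Proof.
  intros Ht; unfold local_disc.
  assert (Hfrac : 0 <= INR (count_in 0 t P) / INR (length P) <= 1).
  { pose proof (count_in_le_length 0 t P) as Hc.
    revert Hc; destruct (length P) as [|l]; intros Hc.
    - replace (count_in 0 t P) with 0%nat by lia; unfold Rdiv; rewrite Rmult_0_l; lra.
    - apply le_INR in Hc; pose proof (pos_INR (count_in 0 t P)).
      assert (Hl : 0 < INR (S l)) by apply lt_0_INR, Nat.lt_0_succ.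
      split; [apply Rdiv_le_0_compat; lra|].
      apply (Rdiv_le_1 _ _ Hl), Hc. }
  apply Rabs_le; lra.
Qed.

Lemma Defs_RInt_eq_RInt f a b : ex_RInt f a b -> Defs.RInt f a b = RInt f a b.
Proof.
  intros H; unfold Defs.RInt; destruct excluded_middle_informative as [H'|H'].
  - symmetry; apply RInt_Reals.
  - exfalso; apply H'; exists (ex_RInt_Reals_0 _ _ _ H); trivial.
Qed.

Lemma Rsup_is_lub E : bound E -> (exists x, E x) -> is_lub E (Rsup E).
Proof.
  intros Hb He; unfold Rsup; apply epsilon_spec.
  destruct (completeness E Hb He) as [m Hm]; exists m; exact Hm.
Qed.

Lemma ex_RInt_sub (f : R -> R) a b c d :
  a <= c <= d -> d <= b -> ex_RInt f a b -> ex_RInt f c d.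
Proof.
  intros Hcd Hdb H; apply (ex_RInt_Chasles_2 f a c d); [lra|].
  apply (ex_RInt_Chasles_1 f a d b); [lra|exact H].
Qed.

Lemma RInt_lt_of_gap f g a b c d x y :
  a <= c < d -> d <= b -> x < y -> ex_RInt f a b -> ex_RInt g a b ->
  (forall t, a <= t <= b -> f t <= g t) ->
  (forall t, c <= t <= d -> f t <= x /\ y <= g t) ->
  RInt f a b < RInt g a b.
Proof.
  intros Hcd Hdb Hxy Hf Hg Hle Hgap.
  assert (Hsplit : forall h, ex_RInt h a b ->
            RInt h a b = RInt h a c + RInt h c d + RInt h d b).
  { intros h Hh.
    rewrite <- (RInt_Chasles h a d b), <- (RInt_Chasles h a c d);
      try (apply (ex_RInt_sub h a b); [lra|lra|exact Hh]); reflexivity. }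
  assert (Hpiece : forall u v, a <= u <= v -> v <= b -> RInt f u v <= RInt g u v).
  { intros u v Huv Hvb; apply RInt_le; [lra|apply (ex_RInt_sub f a b); auto; lra|
      apply (ex_RInt_sub g a b); auto; lra|].
    intros t Ht; apply Hle; lra. }
  assert (Hmiddle : RInt f c d < RInt g c d).
  { apply Rle_lt_trans with (RInt (fun _ => x) c d).
    { apply RInt_le; [lra|apply (ex_RInt_sub f a b); auto; lra|apply ex_RInt_const|].
      intros t Ht; apply Hgap; lra. }
    apply Rlt_le_trans with (RInt (fun _ => y) c d).
    { rewrite !RInt_const; apply Rmult_lt_compat_l; lra. }
    apply RInt_le; [lra|apply ex_RInt_const|apply (ex_RInt_sub g a b); auto; lra|].
    intros t Ht; apply Hgap; lra. }
  rewrite (Hsplit f Hf), (Hsplit g Hg).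
  pose proof (Hpiece a c); pose proof (Hpiece d b); lra.
Qed.

Lemma Lp_norm01_Some_lt q f g a b x y :
  0 < q -> 0 <= a < b -> b <= 1 -> 0 <= x < y ->
  ex_RInt (fun t => rpow (Rabs (f t)) q) 0 1 ->
  ex_RInt (fun t => rpow (Rabs (g t)) q) 0 1 ->
  (forall t, 0 <= t <= 1 -> Rabs (f t) <= Rabs (g t)) ->
  (forall t, a <= t <= b -> Rabs (f t) <= x /\ y <= Rabs (g t)) ->
  Lp_norm01 (Some q) f < Lp_norm01 (Some q) g.
Proof.
  intros Hq Hab Hb Hxy Hf Hg Hle Hgap; unfold Lp_norm01.
  rewrite !Defs_RInt_eq_RInt by assumption.
  apply rpow_lt; [apply Rinv_0_lt_compat, Hq|split].
  - apply RInt_ge_0; [lra|exact Hf|]; intros; apply rpow_nonneg.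
  - apply (RInt_lt_of_gap _ _ 0 1 a b (rpow x q) (rpow y q)); try assumption; try lra.
    + apply rpow_lt; lra.
    + intros t Ht; apply rpow_le; [lra|]; split; [apply Rabs_pos|apply Hle, Ht].
    + intros t Ht; destruct (Hgap t Ht); split; apply rpow_le; try split; try lra.
      apply Rabs_pos.
Qed.

Lemma Lp_norm01_None_lt f g x t0 M :
  (forall t, 0 <= t <= 1 -> Rabs (f t) <= x) ->
  (forall t, 0 <= t <= 1 -> Rabs (g t) <= M) ->
  0 <= t0 <= 1 -> x < Rabs (g t0) ->
  Lp_norm01 None f < Lp_norm01 None g.
Proof.
  intros Hf Hg Ht0 Hx; unfold Lp_norm01.
  destruct (Rsup_is_lub (fun z => exists t, 0 <= t <= 1 /\ z = Rabs (f t))) as [_ Hleast].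
  { exists x; intros z [t [Ht ->]]; apply Hf, Ht. }
  { exists (Rabs (f t0)), t0; auto. }
  destruct (Rsup_is_lub (fun z => exists t, 0 <= t <= 1 /\ z = Rabs (g t))) as [Hupper _].
  { exists M; intros z [t [Ht ->]]; apply Hg, Ht. }
  { exists (Rabs (g t0)), t0; auto. }
  apply Rle_lt_trans with x.
  - apply Hleast; intros z [t [Ht ->]]; apply Hf, Ht.
  - apply Rlt_le_trans with (Rabs (g t0)); [exact Hx|].
    apply Hupper; exists t0; auto.
Qed.

Definition midpoint (n i : nat) : R := (2 * INR i + 1) / (2 * INR n).

Definition midpoints (n : nat) : list R := map (midpoint n) (seq 0 n).

Lemma midpoints_length n : length (midpoints n) = n.
Proof. unfold midpoints; rewrite length_map, length_seq; reflexivity. Qed.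

Lemma midpoint_le n i j : (1 <= n)%nat -> (i <= j)%nat -> midpoint n i <= midpoint n j.
Proof.
  intros Hn Hij; apply le_INR in Hn, Hij; simpl in Hn; unfold midpoint, Rdiv.
  apply Rmult_le_compat_r; [left; apply Rinv_0_lt_compat|]; lra.
Qed.

Lemma midpoints_in_unit n : in_unit (midpoints n).
Proof.
  intros x Hx; unfold midpoints in Hx; apply in_map_iff in Hx as [i [<- Hi]].
  apply in_seq in Hi; assert (Hin : (S i <= n)%nat) by lia.
  apply le_INR in Hin; rewrite S_INR in Hin; pose proof (pos_INR i).
  unfold midpoint; split.
  - apply Rdiv_le_0_compat; lra.
  - apply Rle_div_l; lra.
Qed.

Lemma Rabs_local_disc_midpoints_bound n t : (1 <= n)%nat -> 0 <= t <= 1 ->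
  Rabs (local_disc (midpoints n) t) <= / (2 * INR n).
Proof.
  intros Hn Ht; assert (HN : 1 <= INR n) by (apply le_INR in Hn; exact Hn).
  destruct (count_in_map_seq_monotone (midpoint n) t n) as [Hmn [Hbelow Habove]].
  { intros i j; apply midpoint_le, Hn. }
  { unfold midpoint; apply Rdiv_le_0_compat; simpl; lra. }
  unfold local_disc; rewrite midpoints_length; fold (midpoints n) in *.
  set (m := count_in 0 t (midpoints n)) in *.
  assert (Hlow : 2 * INR m - 1 <= 2 * (INR n * t)).
  { destruct (Nat.eq_dec m 0) as [->|Hm0]; [simpl; nra|].
    destruct Hbelow as [|Hb]; [contradiction|].
    unfold midpoint in Hb; rewrite minus_INR in Hb by lia.
    apply Rlt_div_l in Hb; simpl in *; lra. }
  assert (Hhigh : 2 * (INR n * t) <= 2 * INR m + 1).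
  { destruct Habove as [->|Ha]; [nra|].
    unfold midpoint in Ha; apply Rle_div_r in Ha; lra. }
  replace (INR m / INR n - t) with ((INR m - INR n * t) * / INR n) by (field; lra).
  rewrite Rabs_mult, Rabs_inv, (Rabs_right (INR n)), Rinv_mult by lra.
  apply Rmult_le_compat_r; [left; apply Rinv_0_lt_compat; lra|].
  apply Rabs_le; lra.
Qed.

Lemma Rabs_local_disc_midpoints_minimal n P t :
  (1 <= n)%nat -> length P = n -> 0 <= t <= 1 ->
  Rabs (local_disc (midpoints n) t) <= Rabs (local_disc P t).
Proof.
  intros Hn Hl Ht; assert (HN : 1 <= INR n) by (apply le_INR in Hn; exact Hn).
  pose proof (Rabs_local_disc_midpoints_bound n t Hn Ht) as Hbound.
  unfold local_disc in *; rewrite midpoints_length, Hl in *.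
  set (m := count_in 0 t (midpoints n)) in *; set (c := count_in 0 t P).
  destruct (Nat.eq_dec c m) as [->|Hcm]; [lra|].
  assert (Hgap : 1 <= Rabs (INR c - INR m)).
  { destruct (proj1 (Nat.lt_gt_cases c m) Hcm) as [Hlt|Hlt];
      apply le_INR in Hlt; rewrite S_INR in Hlt;
      [rewrite Rabs_left1|rewrite Rabs_right]; lra. }
  assert (Hdist : / INR n <= Rabs ((INR c / INR n - t) + - (INR m / INR n - t))).
  { replace (_ + - _) with ((INR c - INR m) * / INR n) by (field; lra).
    rewrite Rabs_mult, Rabs_inv, (Rabs_right (INR n)) by lra.
    rewrite <- (Rmult_1_l (/ INR n)) at 1.
    apply Rmult_le_compat_r; [left; apply Rinv_0_lt_compat; lra|exact Hgap]. }
  pose proof (Rabs_triang (INR c / INR n - t) (- (INR m / INR n - t))) as Htri.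
  rewrite Rabs_Ropp in Htri; rewrite Rinv_mult in Hbound; lra.
Qed.

Lemma local_disc_off_grid n k P : (1 <= n)%nat -> length P = n -> (k <= n)%nat ->
  count_in 0 (INR k / INR n) P <> k ->
  exists a b, 0 <= a < b /\ b <= 1 /\
    forall t, a <= t <= b -> 3 / (4 * INR n) <= Rabs (local_disc P t).
Proof.
  intros Hn Hl Hk Hc; assert (HN : 1 <= INR n) by (apply le_INR in Hn; exact Hn).
  set (v := / INR n); assert (Hv : 0 < v) by (apply Rinv_0_lt_compat; lra).
  assert (HNv : INR n * v = 1) by (unfold v; field; lra).
  replace (3 / (4 * INR n)) with (3 * v / 4) by (unfold v; field; lra).
  change (INR k / INR n) with (INR k * v) in Hc.
  unfold local_disc; rewrite Hl.
  set (c := count_in 0 (INR k * v) P) in Hc.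
  pose proof (pos_INR k); apply le_INR in Hk.
  destruct (proj1 (Nat.lt_gt_cases c k) Hc) as [Hlt|Hlt].
  - assert (Hk1 : 1 <= INR k) by (apply (le_INR 1); lia).
    exists (INR k * v - v / 4), (INR k * v); split; [nra|split; [nra|]].
    intros t Ht; change (INR (count_in 0 t P) / INR n) with (INR (count_in 0 t P) * v).
    assert (Hcount : (count_in 0 t P <= k - 1)%nat).
    { apply Nat.le_trans with c; [apply count_in_le; lra|lia]. }
    apply le_INR in Hcount; rewrite minus_INR in Hcount by lia; simpl in Hcount.
    assert (INR (count_in 0 t P) * v <= (INR k - 1) * v) by (apply Rmult_le_compat_r; lra).
    rewrite Rabs_left; lra.
  - assert (Hkn : (k < n)%nat).
    { pose proof (count_in_le_length 0 (INR k * v) P) as Hcn; fold c in Hcn; lia. }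
    apply le_INR in Hkn; rewrite S_INR in Hkn.
    exists (INR k * v), (INR k * v + v / 4); split; [nra|split; [nra|]].
    intros t Ht; change (INR (count_in 0 t P) / INR n) with (INR (count_in 0 t P) * v).
    assert (Hcount : (S k <= count_in 0 t P)%nat).
    { apply Nat.le_trans with c; [lia|apply count_in_le; lra]. }
    apply le_INR in Hcount; rewrite S_INR in Hcount.
    assert ((INR k + 1) * v <= INR (count_in 0 t P) * v) by (apply Rmult_le_compat_r; lra).
    rewrite Rabs_right; lra.
Qed.

Lemma Lp_disc_midpoints_lt p n k P : valid_exp p -> (1 <= n)%nat -> length P = n ->
  (k <= n)%nat -> count_in 0 (INR k / INR n) P <> k ->
  Lp_disc p (midpoints n) < Lp_disc p P.
Proof.
  intros Hp Hn Hl Hk Hc; assert (HN : 1 <= INR n) by (apply le_INR in Hn; exact Hn).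
  destruct (local_disc_off_grid n k P Hn Hl Hk Hc) as [a [b [Hab [Hb Hfar]]]].
  assert (Hsep : / (2 * INR n) < 3 / (4 * INR n)).
  { replace (/ (2 * INR n)) with (2 / (4 * INR n)) by (field; lra).
    apply Rmult_lt_compat_r; [apply Rinv_0_lt_compat|]; lra. }
  unfold Lp_disc; destruct p as [q|]; simpl in Hp.
  - apply (Lp_norm01_Some_lt q _ _ a b (/ (2 * INR n)) (3 / (4 * INR n)));
      try apply ex_RInt_rpow_local_disc; try lra.
    + split; [left; apply Rinv_0_lt_compat; lra|exact Hsep].
    + intros t Ht; apply Rabs_local_disc_midpoints_minimal; assumption.
    + intros t Ht; split; [apply Rabs_local_disc_midpoints_bound; auto; lra|apply Hfar, Ht].
  - apply (Lp_norm01_None_lt _ _ (/ (2 * INR n)) a 1).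
    + intros t Ht; apply Rabs_local_disc_midpoints_bound; assumption.
    + intros t Ht; apply Rabs_local_disc_le_1, Ht.
    + lra.
    + apply (Rlt_le_trans _ _ _ Hsep), Hfar; lra.
Qed.

Theorem mainTheorem5 (n : nat) (p : option R) (P : list R) :
  valid_exp p ->
  length P = n ->
  in_unit P ->
  (forall Q : list R, length Q = n -> in_unit Q -> Lp_disc p P <= Lp_disc p Q) ->
  forall j : nat, (1 <= j <= n)%nat ->
    count_in (INR (j - 1) / INR n) (INR j / INR n) P = 1%nat.
Proof.
  (* [in_unit P] is unused: comparison with the midpoint set alone forces the counts. *)
  intros Hp Hl _ Hmin j Hj.
  assert (Hn : (1 <= n)%nat) by lia.
  assert (Hgrid : forall k, (k <= n)%nat -> count_in 0 (INR k / INR n) P = k).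
  { intros k Hk; destruct (Nat.eq_dec (count_in 0 (INR k / INR n) P) k) as [E|E];
      [exact E|exfalso].
    apply (Rlt_not_le _ _ (Lp_disc_midpoints_lt p n k P Hp Hn Hl Hk E)).
    apply Hmin; [apply midpoints_length|apply midpoints_in_unit]. }
  assert (Hord : 0 <= INR (j - 1) / INR n <= INR j / INR n).
  { assert (0 < INR n) by (apply lt_0_INR; lia).
    split; [apply Rdiv_le_0_compat; [apply pos_INR|lra]|].
    apply Rmult_le_compat_r; [left; apply Rinv_0_lt_compat; lra|apply le_INR; lia]. }
  pose proof (count_in_split _ _ _ P Hord) as Hsplit.
  rewrite (Hgrid j), (Hgrid (j - 1)%nat) in Hsplit by lia; lia.
Qed.
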